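(* For every $n\ge0$ and every $t\in\mathbb{R}$, $Q_n(1-t)=(-1)^n\sigma_n(t)$.
   Context: For positive integers $j$: $\sigma_0(j)=1$, $\sigma_i(j)=\sum_{1\le n_1<\cdots<n_i\le j-1}n_1\cdots n_i$ for $1\le i\le j-1$, $\sigma_i(j)=0$ for $i\ge j$; $Q_0(j)=1$ and $Q_k(j)=-\sum_{i=1}^k\sigma_i(j)Q_{k-i}(j)$ for $k\ge1$. For each fixed $n$, $\sigma_n(j)$ and $Q_n(j)$ agree on all positive integers $j$ with polynomials in $j$; $\sigma_n(t)$ and $Q_n(t)$ for real $t$ denote these polynomials evaluated at $t$. *)

From HB Require Import structures.
From mathcomp Require Import all_boot all_order all_algebra.
From mathcomp Require Import reals.
Set Implicit Arguments. Unset Strict Implicit. Unset Printing Implicit Defensive.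
Import Order.TTheory GRing.Theory Num.Theory.
Local Open Scope ring_scope.

(* sigma i j = sum over subsets {n_1 < ... < n_i} of {1,...,j-1} of n_1*...*n_i.
   Subsets of 'I_j avoiding 0 are exactly the subsets of {1,...,j-1}.
   Automatically: sigma 0 j = 1 and sigma i j = 0 for i >= j. *)
Definition sigma (i j : nat) : nat :=
  (\sum_(S : {set 'I_j} | (#|S| == i) && [forall x in S, 0 < val x])
      \prod_(x in S) val x)%N.

(* Qlist k j = [:: Q_0(j); ...; Q_k(j)], with Q_0 = 1 and
   Q_k = - \sum_(i=1..k) sigma_i(j) Q_(k-i)(j). *)
Fixpoint Qlist (k j : nat) : seq int :=
  match k with
  | 0 => [:: 1]
  | k'.+1 => let l := Qlist k' j in
      rcons l (- \sum_(1 <= i < k'.+2) ((sigma i j)%:Z * nth 0 l (k'.+1 - i)%N))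
  end.

Definition Q (k j : nat) : int := nth 0 (Qlist k j) k.

Definition is_sigma_poly (R : realType) (n : nat) (p : {poly R}) : Prop :=
  forall j : nat, (0 < j)%N -> p.[j%:R] = (sigma n j)%:R.

Definition is_Q_poly (R : realType) (n : nat) (q : {poly R}) : Prop :=
  forall j : nat, (0 < j)%N -> q.[j%:R] = (Q n j)%:~R.

From HB Require Import structures.
From mathcomp Require Import all_boot all_order all_algebra.
From mathcomp Require Import reals.
From mathcomp Require Import ring.
Set Implicit Arguments. Unset Strict Implicit. Unset Printing Implicit Defensive.
Import Order.TTheory GRing.Theory Num.Theory.
Local Open Scope ring_scope.

(* sigma_n(j) is the coefficient of X^n in prod_(k < j) (1 + k X), whence
   sigma_(n+1)(j+1) = sigma_(n+1)(j) + j sigma_n(j); solving this difference equation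
   with sigma_(n+1)(1) = 0 yields the polynomials sigma_n(t).  The recurrence defining Q
   says that Q(j) is the inverse of sigma(j) for the Cauchy product of sequences.  The
   series A_t = sum_n sigma_n(t) X^n and B_t = sum_n (-1)^n sigma_n(1 - t) X^n satisfy
   A_(t+1) = (1 + t X) A_t and B_t = (1 + t X) B_(t+1), so A_t B_t is 1-periodic in t
   and equals A_1 B_1 = 1.  Hence Q_n(j) = (-1)^n sigma_n(1 - j) at every positive
   integer j, and polynomials agreeing at infinitely many points are equal. *)

Section SigmaGenerating.
Variable R : comNzRingType.

Definition sigma_gen (j : nat) : {poly R} := \prod_(k < j) (k%:R *: 'X + 1).

Lemma prod_scaleX (I : finType) (A : {set I}) (c : I -> R) :
  \prod_(i in A) (c i *: 'X) = (\prod_(i in A) c i)%:P * 'X^#|A|.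
Proof.
under eq_bigr do rewrite -mul_polyC.
by rewrite big_split /= -rmorph_prod prodr_const.
Qed.

Lemma coef_sigma_gen i j : (sigma_gen j)`_i = (sigma i j)%:R.
Proof.
rewrite /sigma_gen bigA_distr coef_sum /sigma natr_sum.
rewrite (bigID (fun S : {set 'I_j} => #|S| == i)) /=.
rewrite [X in _ + X]big1 ?addr0 => [|S /negbTE ncardS]; last first.
  by rewrite -big_mkcond /= prod_scaleX coefCM coefXn eq_sym ncardS mulr0.
rewrite [RHS]big_mkcondr /=; apply: eq_bigr => S /eqP cardS.
rewrite -big_mkcond /= prod_scaleX coefCM coefXn cardS eqxx mulr1 -natr_prod.
case: ifP => // /forallPn [x]; rewrite negb_imply lt0n negbK => /andP [xS /eqP x0].
by rewrite (bigD1 x) //= x0 mul0n.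
Qed.

Lemma sigma_gen0 : sigma_gen 0 = 1.
Proof. by rewrite /sigma_gen big_ord0. Qed.

Lemma coef_sigma_genS i j :
  (sigma_gen j.+1)`_i = (sigma_gen j)`_i + (if i is i'.+1 then j%:R * (sigma_gen j)`_i' else 0).
Proof.
rewrite /sigma_gen big_ord_recr /= mulrDr mulr1 coefD addrC -scalerAr coefZ coefMX.
by case: i => [|i] /=; rewrite ?mulr0.
Qed.

End SigmaGenerating.

Lemma sigma0n j : sigma 0 j = 1%N.
Proof.
apply/eqP; rewrite -(eqr_nat int) -coef_sigma_gen.
by elim: j => [|j IHj]; rewrite ?coef_sigma_genS ?IHj ?addr0 // sigma_gen0 coef1.
Qed.

Lemma sigman1 i : sigma i 1 = (i == 0%N).
Proof.
apply/eqP; rewrite -(eqr_nat int) -coef_sigma_gen coef_sigma_genS sigma_gen0 coef1.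
by case: i => [|i]; rewrite ?mul0r addr0.
Qed.

Lemma sigmaSS i j : sigma i.+1 j.+1 = (sigma i.+1 j + j * sigma i j)%N.
Proof. by apply/eqP; rewrite -(eqr_nat int) natrD natrM -!coef_sigma_gen coef_sigma_genS. Qed.

Lemma size_Qlist k j : size (Qlist k j) = k.+1.
Proof. by elim: k => [|k IHk] //=; rewrite size_rcons IHk. Qed.

Lemma nth_Qlist k j i : (i <= k)%N -> nth 0 (Qlist k j) i = Q i j.
Proof.
elim: k i => [|k IHk] i le_ik; first by move: le_ik; rewrite leqn0 => /eqP ->.
rewrite /= nth_rcons size_Qlist; case: ltnP => [lt_ik|le_ki]; first by rewrite IHk.
have -> : i = k.+1 by apply/eqP; rewrite eqn_leq le_ik.
by rewrite eqxx /Q /= nth_rcons size_Qlist ltnn eqxx.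
Qed.

Lemma QS k j : Q k.+1 j = - \sum_(i < k.+1) ((sigma i.+1 j)%:Z * Q (k - i) j).
Proof.
rewrite /Q /= nth_rcons size_Qlist ltnn eqxx big_add1 /= big_mkord.
by congr (- _); apply: eq_bigr => i _; rewrite nth_Qlist // subSS leq_subr.
Qed.

Section Cauchy.
Variable R : comPzRingType.
Implicit Types (a b : nat -> R) (t : R).

Definition cauchy a b k : R := \sum_(i < k.+1) a i * b (k - i)%N.

(* the coefficients of (1 + t X) * \sum_i a i X^i *)
Definition mul1tX t a i : R := a i + (if i is i'.+1 then t * a i' else 0).

Lemma eq_cauchy a a' b b' : a =1 a' -> b =1 b' -> cauchy a b =1 cauchy a' b'.
Proof. by move=> eq_a eq_b k; apply: eq_bigr => i _; rewrite eq_a eq_b. Qed.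

Lemma cauchyS a b k :
  cauchy a b k.+1 = a 0%N * b k.+1 + \sum_(i < k.+1) a i.+1 * b (k - i)%N.
Proof. by rewrite /cauchy big_ord_recl subn0. Qed.

Lemma cauchyC a b : cauchy a b =1 cauchy b a.
Proof.
move=> k; rewrite /cauchy (reindex_inj rev_ord_inj) /=; apply: eq_bigr => i _.
by rewrite subSS subKn 1?mulrC // -ltnS.
Qed.

Lemma cauchy_mul1tXl t a b k :
  cauchy (mul1tX t a) b k = cauchy a b k + (if k is k'.+1 then t * cauchy a b k' else 0).
Proof.
rewrite /cauchy /mul1tX; under eq_bigr do rewrite mulrDl.
rewrite big_split /=; congr (_ + _); case: k => [|k].
  by rewrite big_ord_recl big_ord0 /= mul0r addr0.
rewrite big_ord_recl /= mul0r add0r mulr_sumr.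
by apply: eq_bigr => i _; rewrite subSS mulrA.
Qed.

Lemma cauchy_mul1tXr t a b k :
  cauchy a (mul1tX t b) k = cauchy a b k + (if k is k'.+1 then t * cauchy a b k' else 0).
Proof. by rewrite cauchyC cauchy_mul1tXl; case: k => [|k]; rewrite !(cauchyC b). Qed.

End Cauchy.

Lemma Q_cauchy_inverse (R : comPzRingType) j (b : nat -> R) :
  (forall k, cauchy (fun i => (sigma i j)%:R) b k = (k == 0%N)%:R) ->
  forall k, b k = (Q k j)%:~R.
Proof.
move=> inv_b; elim/ltn_ind => -[_|k IHk].
  by have := inv_b 0%N; rewrite /cauchy big_ord1 sigma0n mul1r.
have := inv_b k.+1; rewrite cauchyS sigma0n mul1r QS rmorphN rmorph_sum /=.
move/eqP; rewrite addr_eq0 => /eqP ->; congr (- _); apply: eq_bigr => i _.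
by rewrite rmorphM /= IHk // ltnS leq_subr.
Qed.

Lemma poly_eq_pos_nat (R : numDomainType) (p q : {poly R}) :
  (forall j, (0 < j)%N -> p.[j%:R] = q.[j%:R]) -> p = q.
Proof.
move=> eq_pq; apply/eqP; rewrite -subr_eq0; apply/negPn/negP => pq_neq0.
pose rs := mkseq (fun i => i.+1%:R : R) (size (p - q)).
have rs_roots : all (root (p - q)) rs.
  by apply/allP => _ /mapP [i _ ->]; rewrite /root !hornerE eq_pq // subrr.
have rs_uniq : uniq rs.
  by apply: mkseq_uniq => a b /eqP; rewrite eqr_nat eqSS => /eqP.
by have := max_poly_roots pq_neq0 rs_roots rs_uniq; rewrite size_mkseq ltnn.
Qed.

Section Antidifference.
Variable R : numFieldType.

Definition ffact_poly (k : nat) : {poly R} := \prod_(0 <= i < k) ('X - i%:R%:P).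

Lemma size_ffact_poly k : size (ffact_poly k) = k.+1.
Proof. by rewrite size_prod_XsubC size_iota subn0. Qed.

Lemma ffact_poly_monic k : ffact_poly k \is monic.
Proof. exact: monic_prod_XsubC. Qed.

Lemma horner_ffact_poly k x : (ffact_poly k).[x] = \prod_(0 <= i < k) (x - i%:R).
Proof. by rewrite horner_prod; under eq_bigr do rewrite hornerXsubC. Qed.

Lemma ffact_poly_diff k x :
  (ffact_poly k.+1).[x + 1] - (ffact_poly k.+1).[x] = k.+1%:R * (ffact_poly k).[x].
Proof.
rewrite !horner_ffact_poly big_nat_recl // big_nat_recr //=.
under eq_bigr do rewrite -natr1 opprD addrACA subrr addr0.
rewrite subr0 -natr1; ring.
Qed.

(* Each step removes the top coefficient using ffact_poly_diff. *)
Fixpoint antidiff_rec (k : nat) (f : {poly R}) : {poly R} :=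
  if k is k'.+1 then
    (f`_k' / k%:R) *: ffact_poly k + antidiff_rec k' (f - f`_k' *: ffact_poly k')
  else 0.

Definition antidiff (f : {poly R}) : {poly R} := antidiff_rec (size f) f.

Lemma size_sub_lead_ffact_poly k (f : {poly R}) :
  (size f <= k.+1)%N -> (size (f - f`_k *: ffact_poly k)%R <= k)%N.
Proof.
move=> size_f; apply/leq_sizeP => m le_km; rewrite coefB coefZ.
have [lt_km|->] : (k < m)%N \/ m = k by case: ltngtP le_km; auto.
  by rewrite !(nth_default 0 (leq_trans _ lt_km)) ?size_ffact_poly // mulr0 subr0.
have := monicP (ffact_poly_monic k); rewrite lead_coefE size_ffact_poly /= => ->.
by rewrite mulr1 subrr.
Qed.

Lemma antidiff_recP k (f : {poly R}) x : (size f <= k)%N ->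
  (antidiff_rec k f).[x + 1] - (antidiff_rec k f).[x] = f.[x].
Proof.
elim: k f => [|k IHk] f size_f /=.
  by move: size_f; rewrite leqn0 size_poly_eq0 => /eqP ->; rewrite !horner0 subrr.
have k1_neq0 : k.+1%:R != 0 :> R by rewrite pnatr_eq0.
have diff_rest := IHk _ (size_sub_lead_ffact_poly size_f).
rewrite !hornerE opprD addrACA -mulrBr ffact_poly_diff diff_rest hornerD hornerN hornerZ.
by rewrite mulrA divfK // addrC subrK.
Qed.

Lemma antidiffP f x : (antidiff f).[x + 1] - (antidiff f).[x] = f.[x].
Proof. exact: antidiff_recP. Qed.

End Antidifference.

Section SigmaPoly.
Variable R : numFieldType.

Fixpoint sigma_poly n : {poly R} :=
  if n is n'.+1 then let g := antidiff ('X * sigma_poly n') in g - (g.[1])%:P else 1.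

Lemma sigma_polyS_shift n x :
  (sigma_poly n.+1).[x + 1] = (sigma_poly n.+1).[x] + x * (sigma_poly n).[x].
Proof.
have := antidiffP ('X * sigma_poly n) x; rewrite hornerM hornerX => <- /=.
by rewrite !hornerD !hornerN !hornerC [RHS]addrC addrA subrK.
Qed.

Lemma sigma_poly_at1 n : (sigma_poly n).[1] = (n == 0%N)%:R.
Proof. by case: n => [|n]; rewrite /= !hornerE ?subrr. Qed.

Lemma sigma_poly_at0 n : (sigma_poly n).[0] = (n == 0%N)%:R.
Proof.
case: n => [|n]; first by rewrite hornerC.
by have := sigma_polyS_shift n 0; rewrite add0r mul0r addr0 sigma_poly_at1 => <-.
Qed.

Definition sigma_seq (t : R) i := (sigma_poly i).[t].
Definition sigma_dual_seq (t : R) i := (-1) ^+ i * (sigma_poly i).[1 - t].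

Lemma sigma_seq_shift t : sigma_seq (t + 1) =1 mul1tX t (sigma_seq t).
Proof.
by case=> [|i]; rewrite /sigma_seq /mul1tX ?sigma_polyS_shift // !hornerC addr0.
Qed.

Lemma sigma_dual_seq_shift t : sigma_dual_seq t =1 mul1tX t (sigma_dual_seq (t + 1)).
Proof.
rewrite /sigma_dual_seq /mul1tX => -[|i]; first by rewrite !hornerC addr0.
rewrite (_ : 1 - t = - t + 1) ?sigma_polyS_shift; last by ring.
rewrite (_ : 1 - (t + 1) = - t) ?exprS; last by ring.
ring.
Qed.

Lemma cauchy_sigma_periodic t :
  cauchy (sigma_seq (t + 1)) (sigma_dual_seq (t + 1)) =1
  cauchy (sigma_seq t) (sigma_dual_seq t).
Proof.
move=> k; rewrite (eq_cauchy (sigma_seq_shift t) (frefl _)).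
by rewrite [RHS](eq_cauchy (frefl _) (sigma_dual_seq_shift t)) cauchy_mul1tXl cauchy_mul1tXr.
Qed.

Lemma cauchy_sigma_nat j k : (0 < j)%N ->
  cauchy (sigma_seq j%:R) (sigma_dual_seq j%:R) k = (k == 0%N)%:R.
Proof.
elim: j => [//|[_ _|j IHj _]]; last by rewrite -natr1 cauchy_sigma_periodic IHj.
rewrite /cauchy big_ord_recl big1 => [|i _]; last by rewrite /sigma_seq sigma_poly_at1 mul0r.
rewrite /sigma_seq /sigma_dual_seq subrr sigma_poly_at1 sigma_poly_at0 mul1r subn0 addr0.
by case: k => [|k]; rewrite ?expr0 ?mulr1 ?mulr0.
Qed.

End SigmaPoly.

Section SigmaPolyReal.
Variable R : realType.

Lemma sigma_polyP n : is_sigma_poly n (sigma_poly R n).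
Proof.
elim: n => [|n IHn] j j_gt0; first by rewrite hornerC sigma0n.
elim: j j_gt0 => [//|[_ _|j IHj _]]; first by rewrite sigma_poly_at1 sigman1.
by rewrite -natr1 sigma_polyS_shift IHj // IHn // (sigmaSS n j.+1) natrD natrM.
Qed.

Lemma sigma_poly_unique n (p : {poly R}) : is_sigma_poly n p -> p = sigma_poly R n.
Proof. by move=> sigma_p; apply: poly_eq_pos_nat => j j_gt0; rewrite sigma_p // sigma_polyP. Qed.

Definition Q_poly n : {poly R} := (-1) ^+ n *: (sigma_poly R n \Po (1 - 'X)).

Lemma Q_polyP n : is_Q_poly n (Q_poly n).
Proof.
move=> j j_gt0; rewrite hornerZ horner_comp !hornerE.
apply: (Q_cauchy_inverse (b := sigma_dual_seq j%:R) _ n) => k.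
rewrite -(cauchy_sigma_nat _ k j_gt0); apply: eq_cauchy => // i.
by rewrite /sigma_seq sigma_polyP.
Qed.

Lemma Q_poly_unique n (q : {poly R}) : is_Q_poly n q -> q = Q_poly n.
Proof. by move=> Q_q; apply: poly_eq_pos_nat => j j_gt0; rewrite Q_q // Q_polyP. Qed.

End SigmaPolyReal.

Theorem lemma2p4 (R : realType) (n : nat) :
  (exists p : {poly R}, is_sigma_poly n p) /\
  (exists q : {poly R}, is_Q_poly n q) /\
  (forall (p q : {poly R}), is_sigma_poly n p -> is_Q_poly n q ->
     forall t : R, q.[1 - t] = (-1) ^+ n * p.[t]).
Proof.
split; first by exists (sigma_poly R n); apply: sigma_polyP.
split; first by exists (Q_poly R n); apply: Q_polyP.
move=> p q /sigma_poly_unique -> /Q_poly_unique -> t.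
by rewrite hornerZ horner_comp !hornerE subKr.
Qed.
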